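(* Let $\phi$ be an LTL formula in negation normal form that is in neXt Normal Form. If $A$ is a satisfying assignment of $\phi^p$, then there is a propositional assignment $A'$ for $\phi$ with $\phi\in A'$ such that $A'\cap\mathrm{atoms}(\phi)\subseteq A$. Conversely, if $A'$ is a propositional assignment for $\phi$ with $\phi\in A'$, then there is a satisfying assignment $A$ of $\phi^p$ such that $A'\cap\mathrm{atoms}(\phi)\subseteq A$.
   Context: $AP$ is a finite set of atoms, $L=\{a,\neg a: a\in AP\}$. LTL formulas in NNF: $\phi::= \mathit{tt}\mid \mathit{ff}\mid \ell \mid \phi\wedge\phi\mid\phi\vee\phi\mid \phi U\phi\mid \phi R\phi\mid X\phi$, $\ell\in L$. Propositional atoms: $\mathrm{atoms}(\phi)=\{\phi\}$ if $\phi$ is an atom, Next, Until or Release formula; $\mathrm{atoms}(\neg\psi)=\mathrm{atoms}(\psi)$; $\mathrm{atoms}(\phi_1\wedge\phi_2)=\mathrm{atoms}(\phi_1\vee\phi_2)=\mathrm{atoms}(\phi_1)\cup\mathrm{atoms}(\phi_2)$. $\phi$ is in XNF if $\mathrm{atoms}(\phi)$ contains no Until or Release formula. $\phi^p$ denotes $\phi$ viewed as a propositional formula whose propositional variables are the elements of $\mathrm{atoms}(\phi)$; a satisfying assignment $A$ of $\phi^p$ is identified with the set of variables in $\mathrm{atoms}(\phi)$ it makes true. The closure $cl(\phi)$ is the smallest set containing $\phi$, closed under immediate subformulas (operands of $\wedge,\vee,U,R,X,\neg$), and containing $X\psi$ for every Until or Release formula $\psi$ in it. A propositional assignment for $\phi$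 is a set $A'\subseteq cl(\phi)\cup L$ such that: for each $a\in AP$ exactly one of $a,\neg a$ is in $A'$; $(\theta_1\wedge\theta_2)\in A'\Rightarrow\theta_1,\theta_2\in A'$; $(\theta_1\vee\theta_2)\in A'\Rightarrow\theta_1\in A'$ or $\theta_2\in A'$; $(\theta_1U\theta_2)\in A'\Rightarrow\theta_2\in A'$ or both $\theta_1\in A'$ and $X(\theta_1U\theta_2)\in A'$; $(\theta_1R\theta_2)\in A'\Rightarrow\theta_2\in A'$ and ($\theta_1\in A'$ or $X(\theta_1R\theta_2)\in A'$).
   Formalization: A propositional assignment for φ never contains ff: its definition gains the clause ff ∉ A′, which constrains both directions through A′. The statement above fails without it. *)

From mathcomp Require Import all_boot.
Set Implicit Arguments. Unset Strict Implicit. Unset Printing Implicit Defensive.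

(* LTL formulas in negation normal form over atoms AP.
   [Lit true a] is the literal a, [Lit false a] is the literal ~a. *)
Inductive form (AP : Type) : Type :=
| Tt | Ff
| Lit (b : bool) (a : AP)
| And (f g : form AP) | Or (f g : form AP)
| Until (f g : form AP) | Release (f g : form AP)
| Next (f : form AP).
Arguments Tt {AP}. Arguments Ff {AP}.

Section Defs.
Variable AP : finType.
Notation form := (form AP).

Definition fset_ := form -> Prop.

Fixpoint atoms (f : form) : fset_ :=
  match f with
  | Tt | Ff => fun _ => False
  | Lit true a => fun g => g = Lit true a
  | Lit false a => fun g => g = Lit true a
  | And f1 f2 | Or f1 f2 => fun g => atoms f1 g \/ atoms f2 g
  | Until _ _ | Release _ _ | Next _ => fun g => g = f
  end.

Definition is_UR (g : form) : Prop :=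
  match g with Until _ _ | Release _ _ => True | _ => False end.

Definition xnf (phi : form) : Prop := forall g, atoms phi g -> ~ is_UR g.

(* Evaluation of phi^p under the set A of propositional variables made true. *)
Fixpoint peval (A : fset_) (f : form) : Prop :=
  match f with
  | Tt => True
  | Ff => False
  | Lit true a => A (Lit true a)
  | Lit false a => ~ A (Lit true a)
  | And f1 f2 => peval A f1 /\ peval A f2
  | Or f1 f2 => peval A f1 \/ peval A f2
  | Until _ _ | Release _ _ | Next _ => A f
  end.

(* A is a satisfying assignment of phi^p (a set of variables of phi^p). *)
Definition sat_assign (phi : form) (A : fset_) : Prop :=
  (forall g, A g -> atoms phi g) /\ peval A phi.

Inductive cl (phi : form) : form -> Prop :=
| cl_self : cl phi phi
| cl_andl f g : cl phi (And f g) -> cl phi f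
| cl_andr f g : cl phi (And f g) -> cl phi g
| cl_orl f g : cl phi (Or f g) -> cl phi f
| cl_orr f g : cl phi (Or f g) -> cl phi g
| cl_untill f g : cl phi (Until f g) -> cl phi f
| cl_untilr f g : cl phi (Until f g) -> cl phi g
| cl_releasel f g : cl phi (Release f g) -> cl phi f
| cl_releaser f g : cl phi (Release f g) -> cl phi g
| cl_next f : cl phi (Next f) -> cl phi f
| cl_neg a : cl phi (Lit false a) -> cl phi (Lit true a)
| cl_XU f g : cl phi (Until f g) -> cl phi (Next (Until f g))
| cl_XR f g : cl phi (Release f g) -> cl phi (Next (Release f g)).

Definition is_lit (g : form) : Prop :=
  match g with Lit _ _ => True | _ => False end.

Definition prop_assign (phi : form) (A' : fset_) : Prop :=
  (forall g, A' g -> cl phi g \/ is_lit g) /\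
      (forall a : AP, (A' (Lit true a) \/ A' (Lit false a)) /\
                      ~ (A' (Lit true a) /\ A' (Lit false a))) /\
      ~ A' Ff /\
      (forall f g, A' (And f g) -> A' f /\ A' g) /\
      (forall f g, A' (Or f g) -> A' f \/ A' g) /\
      (forall f g, A' (Until f g) -> A' g \/ (A' f /\ A' (Next (Until f g)))) /\
      (forall f g, A' (Release f g) -> A' g /\ (A' f \/ A' (Next (Release f g)))).

End Defs.

From mathcomp Require Import all_boot.
From Stdlib Require Import Classical.

Set Implicit Arguments. Unset Strict Implicit. Unset Printing Implicit Defensive.

(* Both directions work on the propositional skeleton of phi, the subformulas
   reached through [And] and [Or] only.  From a model A of phi^p, keep the
   literals A decides and the skeleton nodes true under A: the boolean closure
   conditions hold by the semantics of phi^p, and those for U and R are vacuous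
   because, phi being in XNF, A makes no U or R formula true.  Conversely, a
   propositional assignment containing phi propagates truth down the skeleton
   to its leaves, which are atoms of phi, so its trace on atoms(phi) models phi^p. *)

Section PropositionalSkeleton.
Variable AP : finType.
Implicit Types (phi f g h : form AP) (A : form AP -> Prop).

Fixpoint prop_subform phi g : Prop :=
  g = phi \/ match phi with
             | And f1 f2 | Or f1 f2 => prop_subform f1 g \/ prop_subform f2 g
             | _ => False
             end.

Lemma prop_subform_refl phi : prop_subform phi phi.
Proof. by case: phi => *; left. Qed.

Lemma prop_subform_trans phi h g :
  prop_subform phi h -> prop_subform h g -> prop_subform phi g.
Proof.
elim: phi h => [| |b a|f1 IH1 f2 IH2|f1 IH1 f2 IH2|f1 _ f2 _|f1 _ f2 _|f1 _] h /=;
  try by move=> [->|[]].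
- by move=> [->|[/IH1|/IH2]] // H /H; tauto.
- by move=> [->|[/IH1|/IH2]] // H /H; tauto.
Qed.

Lemma prop_subform_And phi f1 f2 :
  prop_subform phi (And f1 f2) -> prop_subform phi f1 /\ prop_subform phi f2.
Proof.
by move=> H; split; apply: (prop_subform_trans H); right;
  [left|right]; apply: prop_subform_refl.
Qed.

Lemma prop_subform_Or phi f1 f2 :
  prop_subform phi (Or f1 f2) -> prop_subform phi f1 /\ prop_subform phi f2.
Proof.
by move=> H; split; apply: (prop_subform_trans H); right;
  [left|right]; apply: prop_subform_refl.
Qed.

Lemma cl_prop_subform phi h g : cl phi h -> prop_subform h g -> cl phi g.
Proof.
elim: h g => [| |b a|f1 IH1 f2 IH2|f1 IH1 f2 IH2|f1 _ f2 _|f1 _ f2 _|f1 _] g Hh /=;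
  try by move=> [->|[]].
- by move=> [->|[/IH1|/IH2]] //; apply; [exact: cl_andl Hh|exact: cl_andr Hh].
- by move=> [->|[/IH1|/IH2]] //; apply; [exact: cl_orl Hh|exact: cl_orr Hh].
Qed.

Lemma atoms_prop_subform phi g h :
  prop_subform phi g -> atoms g h -> atoms phi h.
Proof.
elim: phi g => [| |b a|f1 IH1 f2 IH2|f1 IH1 f2 IH2|f1 _ f2 _|f1 _ f2 _|f1 _] g /=;
  try by move=> [->|[]].
- by move=> [->|[/IH1|/IH2]] // H /H; tauto.
- by move=> [->|[/IH1|/IH2]] // H /H; tauto.
Qed.

Lemma peval_atom A phi g : atoms phi g -> peval A g <-> A g.
Proof.
elim: phi => [| |[] a|f1 IH1 f2 IH2|f1 IH1 f2 IH2|f1 _ f2 _|f1 _ f2 _|f1 _] //=;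
  by [move=> ->|case].
Qed.

Lemma xnf_sat_assign_not_UR phi A g :
  xnf phi -> sat_assign phi A -> A g -> ~ is_UR g.
Proof. by move=> xnf_phi [A_atoms _] /A_atoms; apply: xnf_phi. Qed.

Definition extend_assign phi A g : Prop :=
  match g with
  | Lit _ _ => peval A g
  | _ => prop_subform phi g /\ peval A g
  end.

Lemma extend_assign_peval phi A g : extend_assign phi A g -> peval A g.
Proof. by case: g => //= *; tauto. Qed.

Lemma extend_assignI phi A g :
  prop_subform phi g -> peval A g -> extend_assign phi A g.
Proof. by case: g => /= *; tauto. Qed.

Lemma extend_assign_cl phi A g :
  extend_assign phi A g -> cl phi g \/ is_lit g.
Proof.
case: g => [| |b a|f1 f2|f1 f2|f1 f2|f1 f2|f1] /= Hg; try by right.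
all: by left; apply: (cl_prop_subform (cl_self phi)); case: Hg.
Qed.

Lemma extend_assign_prop_assign phi A :
  xnf phi -> sat_assign phi A -> prop_assign phi (extend_assign phi A).
Proof.
move=> xnf_phi satA.
have noUR := xnf_sat_assign_not_UR xnf_phi satA.
split; first exact: extend_assign_cl.
split; first by move=> a /=; split; [exact: classic|case].
split; first by case.
split.
  move=> f1 f2 /= [/prop_subform_And [H1 H2] [P1 P2]].
  by split; exact: extend_assignI.
split.
  move=> f1 f2 /= [/prop_subform_Or [H1 H2] [P1|P2]];
  [left|right]; exact: extend_assignI.
by split=> f1 f2 [_ /noUR /(_ I)].
Qed.

Definition restrict_assign phi (A' : form AP -> Prop) g : Prop := atoms phi g /\ A' g.

Lemma peval_restrict_assign phi (A' : form AP -> Prop) g :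
  prop_assign phi A' -> prop_subform phi g -> A' g ->
  peval (restrict_assign phi A') g.
Proof.
move=> [_ [A'_lit [A'_Ff [A'_And [A'_Or _]]]]].
have atom_in h : prop_subform phi h -> A' h -> atoms h h ->
    restrict_assign phi A' h.
  by move=> Hh A'h /(atoms_prop_subform Hh).
elim: g => [| |[] a|f1 IH1 f2 IH2|f1 IH1 f2 IH2|f1 _ f2 _|f1 _ f2 _|f1 _] //=.
- by move=> Hh A'h; apply: atom_in.
- by move=> _ A'na [_ A'a]; case: (A'_lit a) => _; apply.
- move=> /prop_subform_And [H1 H2] /A'_And [A'1 A'2]; split; auto.
- move=> /prop_subform_Or [H1 H2] /A'_Or [A'1|A'2]; [left|right]; auto.
- by move=> Hh A'h; apply: atom_in.
- by move=> Hh A'h; apply: atom_in.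
- by move=> Hh A'h; apply: atom_in.
Qed.

Lemma restrict_assign_sat_assign phi (A' : form AP -> Prop) :
  prop_assign phi A' -> A' phi -> sat_assign phi (restrict_assign phi A').
Proof.
move=> A'_prop A'phi; split; first by move=> g [].
exact: peval_restrict_assign (prop_subform_refl phi) A'phi.
Qed.

End PropositionalSkeleton.

Theorem theorem4 (AP : finType) (phi : form AP) :
  xnf phi ->
  (forall A : form AP -> Prop, sat_assign phi A ->
     exists A' : form AP -> Prop,
       [/\ prop_assign phi A', A' phi &
           forall g, A' g -> atoms phi g -> A g]) /\
  (forall A' : form AP -> Prop, prop_assign phi A' -> A' phi ->
     exists A : form AP -> Prop,
       sat_assign phi A /\ (forall g, A' g -> atoms phi g -> A g)).
Proof.
move=> xnf_phi; split=> [A satA | A' A'_prop A'phi].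
- exists (extend_assign phi A); split.
  + exact: extend_assign_prop_assign.
  + by apply: extend_assignI (prop_subform_refl phi) satA.2.
  + by move=> g /extend_assign_peval Pg atom_g; apply/(peval_atom A atom_g).
- exists (restrict_assign phi A'); split.
  + exact: restrict_assign_sat_assign.
  + by move=> g A'g atom_g; split.
Qed.
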